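(* As $n\to\infty$, $$E_Y(\Phi_n)=n^2+(1-2\gamma)n-2n\ln n+o(n),$$ where $\gamma$ is the Euler–Mascheroni constant.
   Context: $\mathcal{BT}_n$ is the set of binary phylogenetic trees with leaves bijectively labeled by $\{1,\dots,n\}$ (rooted, every internal node with exactly two children). For $T\in\mathcal{BT}_n$, $\Phi(T)=\sum_{1\le i<j\le n}\delta_T(LCA_T(i,j))$, where $\delta_T$ is depth (arcs from the root) and $LCA$ is lowest common ancestor; $\Phi_n$ is $\Phi(T)$ for random $T\in\mathcal{BT}_n$. Under the Yule model $T$ has probability $P_Y(T)=\frac{2^{n-1}}{n!}\prod_{v\in V_{int}(T)}\frac{1}{\kappa_T(v)-1}$, with $V_{int}(T)$ the internal nodes and $\kappa_T(v)$ the number of leaves below $v$; $E_Y$ is expectation under it. *)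

From Stdlib Require Import Reals Lra Lia Arith Bool List Permutation.
Import ListNotations.
Open Scope R_scope.

(* Rooted binary trees with leaves labelled by naturals; children are ordered
   in this datatype, the unordered (phylogenetic) tree is represented by its
   canonical form, see [canonical]. *)
Inductive tree : Type :=
| Leaf : nat -> tree
| Node : tree -> tree -> tree.

Fixpoint leaves (t : tree) : list nat :=
  match t with
  | Leaf k => [k]
  | Node l r => leaves l ++ leaves r
  end.

Definition kappa (t : tree) : nat := length (leaves t).

Fixpoint minleaf (t : tree) : nat :=
  match t with
  | Leaf k => k
  | Node l r => Nat.min (minleaf l) (minleaf r)
  end.

(* canonical representative of an unordered tree: at every internal node the
   left child contains the smaller minimal label *)
Fixpoint canonical (t : tree) : Prop :=
  match t with
  | Leaf _ => True
  | Node l r => (minleaf l < minleaf r)%nat /\ canonical l /\ canonical r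
  end.

Definition IsBT (n : nat) (t : tree) : Prop :=
  Permutation (leaves t) (seq 1 n) /\ canonical t.

Definition has_leaf (t : tree) (i : nat) : bool :=
  existsb (Nat.eqb i) (leaves t).

Fixpoint lca_depth (t : tree) (i j : nat) : nat :=
  match t with
  | Leaf _ => 0%nat
  | Node l r =>
      if has_leaf l i && has_leaf l j then S (lca_depth l i j)
      else if has_leaf r i && has_leaf r j then S (lca_depth r i j)
      else 0%nat
  end.

Definition Phi (n : nat) (t : tree) : nat :=
  fold_right Nat.add 0%nat
    (flat_map (fun i => map (fun j => lca_depth t i j) (seq (S i) (n - i)))
              (seq 1 n)).

Fixpoint yule_prod (t : tree) : R :=
  match t with
  | Leaf _ => 1
  | Node l r => / (INR (kappa t) - 1) * yule_prod l * yule_prod r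
  end.

Definition P_Y (n : nat) (t : tree) : R :=
  2 ^ (n - 1) / INR (fact n) * yule_prod t.

(* E_Y(Phi_n), given an exact duplicate-free enumeration [L] of BT_n *)
Definition E_Y_Phi (n : nat) (L : list tree) : R :=
  fold_right Rplus 0 (map (fun t => P_Y n t * INR (Phi n t)) L).

Fixpoint harmonic (n : nat) : R :=
  match n with
  | O => 0
  | S m => harmonic m + / INR (S m)
  end.

(* The proof computes E_Y(Phi_n) exactly: it equals e_n = n(n+1) - 2 n H_n
   for n >= 1, and (e_n - n^2 - (1 - 2 gamma) n + 2 n ln n) / n is
   -2 (H_n - ln n - gamma), which tends to 0.
   - Sums: real sums over lists ([lsum]) and [sum_f_R0] identities.
   - Enumeration: a canonical tree on a sorted label list x :: s is a node
     whose left subtree carries x and the left part A of a split (A, B) of s,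
     and whose right subtree carries B.  [gen] enumerates along this
     decomposition; it is sound, complete and duplicate-free, so any exact
     enumeration of BT_n is a permutation of [gen n (seq 1 n)].
   - Phi(T) = phi_rec(T), where a node adds C(kappa l, 2) + C(kappa r, 2)
     to Phi of its children, since those pairs have their LCA one level deeper.
   - Summing over splits by the sizes of their parts, the total Yule weight
     is n!/2^(n-1) and the Yule-weighted Phi is n!/2^(n-1) * e_n (induction
     on the number of labels); the normalisation 2^(n-1)/n! of P_Y gives e_n. *)

From Stdlib Require Import Reals Lra Lia List Permutation Sorted Factorial.
Import ListNotations.
Open Scope R_scope.

Definition lsum {A : Type} (f : A -> R) (L : list A) : R :=
  fold_right Rplus 0 (map f L).
Arguments lsum {A} f L : simpl never.

Lemma lsum_nil {A} (f : A -> R) : lsum f [] = 0.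
Proof. reflexivity. Qed.

Lemma lsum_cons {A} (f : A -> R) x L : lsum f (x :: L) = f x + lsum f L.
Proof. reflexivity. Qed.

Lemma lsum_app {A} (f : A -> R) L1 L2 :
  lsum f (L1 ++ L2) = lsum f L1 + lsum f L2.
Proof.
  induction L1 as [|x L1 IH]; cbn; rewrite ?lsum_nil, ?lsum_cons, ?IH; lra.
Qed.

Lemma lsum_map {A B} (f : B -> R) (g : A -> B) L :
  lsum f (map g L) = lsum (fun x => f (g x)) L.
Proof. unfold lsum; rewrite map_map; reflexivity. Qed.

Lemma lsum_flat_map {A B} (f : B -> R) (g : A -> list B) L :
  lsum f (flat_map g L) = lsum (fun x => lsum f (g x)) L.
Proof.
  induction L as [|x L IH]; cbn; [reflexivity|]. rewrite lsum_app, lsum_cons, IH; reflexivity.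
Qed.

Lemma lsum_ext {A} (f g : A -> R) L :
  (forall x, In x L -> f x = g x) -> lsum f L = lsum g L.
Proof. intros H; unfold lsum; f_equal; apply map_ext_in; exact H. Qed.

Lemma lsum_perm {A} (f : A -> R) L1 L2 : Permutation L1 L2 -> lsum f L1 = lsum f L2.
Proof. induction 1; rewrite ?lsum_cons in *; lra. Qed.

Lemma lsum_scal {A} (f : A -> R) c L : lsum (fun x => c * f x) L = c * lsum f L.
Proof. induction L as [|x L IH]; rewrite ?lsum_nil, ?lsum_cons, ?IH; lra. Qed.

Lemma lsum_plus {A} (f g : A -> R) L :
  lsum (fun x => f x + g x) L = lsum f L + lsum g L.
Proof. induction L as [|x L IH]; rewrite ?lsum_nil, ?lsum_cons, ?IH; lra. Qed.

Lemma lsum_pairs {A B} (f : A -> R) (g : B -> R) L1 L2 :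
  lsum (fun a => lsum (fun b => f a * g b) L2) L1 = lsum f L1 * lsum g L2.
Proof.
  induction L1 as [|a L1 IH]; rewrite ?lsum_nil, ?lsum_cons; [lra|].
  rewrite IH, (lsum_scal g (f a)); lra.
Qed.

Lemma lsum_list_prod {A B C} (f : C -> R) (h : A -> B -> C) L1 L2 :
  lsum (fun q => f (h (fst q) (snd q))) (list_prod L1 L2) =
  lsum (fun a => lsum (fun b => f (h a b)) L2) L1.
Proof.
  induction L1 as [|a L1 IH]; cbn; [reflexivity|].
  rewrite lsum_app, lsum_map, IH, lsum_cons; reflexivity.
Qed.

Lemma sum_f_R0_reflect (f : nat -> R) m :
  sum_f_R0 f m = sum_f_R0 (fun a => f (m - a)%nat) m.
Proof.
  induction m as [|m IH]; [reflexivity|].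
  rewrite tech5, (decomp_sum (fun a => f (S m - a)%nat)) by lia.
  rewrite Nat.sub_0_r; cbn [Nat.pred]. rewrite IH. cbn [Nat.sub]. lra.
Qed.

Lemma sum_succ_INR m : sum_f_R0 (fun a => INR (S a)) m = INR (S m) * INR (S (S m)) / 2.
Proof. induction m as [|m IH]; [cbn; lra|]. rewrite tech5, IH, !(S_INR (S _)), S_INR; lra. Qed.

Fixpoint splits (s : list nat) : list (list nat * list nat) :=
  match s with
  | [] => [([], [])]
  | y :: s' => map (fun p => (y :: fst p, snd p)) (splits s')
               ++ map (fun p => (fst p, y :: snd p)) (splits s')
  end.

Lemma splits_perm s p : In p (splits s) -> Permutation (fst p ++ snd p) s.
Proof.
  revert p; induction s as [|y s IH]; cbn; intros p H.
  - destruct H as [<-|[]]; constructor.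
  - apply in_app_or in H as [H|H]; apply in_map_iff in H as [q [<- Hq]]; cbn.
    + constructor; auto.
    + apply Permutation_sym, Permutation_cons_app, Permutation_sym; auto.
Qed.

Lemma splits_incl s p x : In p (splits s) -> In x (fst p) \/ In x (snd p) -> In x s.
Proof.
  intros Hp Hx. apply (Permutation_in x (splits_perm s p Hp)), in_or_app; tauto.
Qed.

Lemma splits_complete s L1 L2 : Permutation (L1 ++ L2) s ->
  exists p, In p (splits s) /\ Permutation L1 (fst p) /\ Permutation L2 (snd p).
Proof.
  revert L1 L2; induction s as [|y s IH]; cbn; intros L1 L2 H.
  - apply Permutation_sym, Permutation_nil, app_eq_nil in H as [-> ->].
    exists ([], []); cbn; auto.
  - assert (Hy : In y (L1 ++ L2)) by (apply (Permutation_in y (Permutation_sym H)); now left).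
    apply in_app_or in Hy as [Hy|Hy]; apply in_split in Hy as [u [v ->]].
    + assert (P : Permutation ((u ++ v) ++ L2) s).
      { apply (Permutation_cons_inv (a := y)); rewrite <- H, <- !app_assoc.
        apply Permutation_middle. }
      destruct (IH _ _ P) as [q [Hq [H1 H2]]].
      exists (y :: fst q, snd q); repeat split; auto.
      * apply in_or_app; left; apply in_map_iff; eauto.
      * cbn; apply Permutation_sym, Permutation_cons_app, Permutation_sym; auto.
    + assert (P : Permutation (L1 ++ u ++ v) s).
      { apply (Permutation_cons_inv (a := y)); rewrite <- H, !app_assoc.
        apply Permutation_middle. }
      destruct (IH _ _ P) as [q [Hq [H1 H2]]].
      exists (fst q, y :: snd q); repeat split; auto.
      * apply in_or_app; right; apply in_map_iff; eauto.
      * cbn; apply Permutation_sym, Permutation_cons_app, Permutation_sym; auto.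
Qed.

Lemma splits_sorted s p : StronglySorted lt s -> In p (splits s) ->
  StronglySorted lt (fst p) /\ StronglySorted lt (snd p).
Proof.
  revert p; induction s as [|y s IH]; cbn; intros p Hs H.
  - destruct H as [<-|[]]; split; constructor.
  - apply StronglySorted_inv in Hs as [Hs Hy]; rewrite Forall_forall in Hy.
    assert (Hy' : forall q, In q (splits s) -> Forall (lt y) (fst q) /\ Forall (lt y) (snd q)).
    { intros q Hq; split; apply Forall_forall; intros z Hz; apply Hy;
        apply (splits_incl s q); auto. }
    apply in_app_or in H as [H|H]; apply in_map_iff in H as [q [<- Hq]];
      destruct (IH q Hs Hq), (Hy' q Hq); cbn; split; auto; constructor; auto.
Qed.

Lemma splits_nodup s : NoDup s -> NoDup (splits s).
Proof.
  induction s as [|y s IH]; cbn; intros Hs.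
  - repeat constructor; auto.
  - apply NoDup_cons_iff in Hs as [Hy Hs]. apply NoDup_app.
    + apply FinFun.Injective_map_NoDup; auto.
      intros [a b] [c d] E; cbn in E; congruence.
    + apply FinFun.Injective_map_NoDup; auto.
      intros [a b] [c d] E; cbn in E; congruence.
    + intros q K1 K2. apply in_map_iff in K1 as [q1 [<- _]].
      apply in_map_iff in K2 as [q2 [E Hq2]]. injection E as E1 _.
      apply Hy, (splits_incl s q2); auto. left; rewrite E1; now left.
Qed.

Lemma splits_unique s p p' : NoDup s -> In p (splits s) -> In p' (splits s) ->
  Permutation (fst p) (fst p') -> p = p'.
Proof.
  revert p p'; induction s as [|y s IH]; cbn; intros p p' Hs H H' HP.
  - destruct H as [<-|[]], H' as [<-|[]]; reflexivity.
  - apply NoDup_cons_iff in Hs as [Hy Hs].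
    apply in_app_or in H as [H|H]; apply in_map_iff in H as [q [<- Hq]];
      apply in_app_or in H' as [H'|H']; apply in_map_iff in H' as [q' [<- Hq']];
      cbn in HP.
    + apply Permutation_cons_inv in HP; rewrite (IH q q'); auto.
    + exfalso; apply Hy, (splits_incl s q' y); auto.
      left; apply (Permutation_in y HP); now left.
    + exfalso; apply Hy, (splits_incl s q y); auto.
      left; apply (Permutation_in y (Permutation_sym HP)); now left.
    + rewrite (IH q q' Hs Hq Hq' HP); reflexivity.
Qed.

Lemma leaves_nonnil t : leaves t <> [].
Proof.
  induction t as [k|l IHl r IHr]; cbn; [discriminate|].
  intros E; apply app_eq_nil in E; tauto.
Qed.

Lemma minleaf_in t : In (minleaf t) (leaves t).
Proof.
  induction t as [k|l IHl r IHr]; cbn; auto. apply in_or_app.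
  destruct (Nat.min_spec (minleaf l) (minleaf r)) as [[_ ->]|[_ ->]]; auto.
Qed.

Lemma minleaf_le t k : In k (leaves t) -> (minleaf t <= k)%nat.
Proof.
  induction t as [k'|l IHl r IHr]; cbn; intros H.
  - destruct H as [<-|[]]; lia.
  - apply in_app_or in H as [H|H]; [specialize (IHl H)|specialize (IHr H)]; lia.
Qed.

Lemma perm_single_leaf t x : Permutation (leaves t) [x] -> t = Leaf x.
Proof.
  intros H; destruct t as [k|l r].
  - apply Permutation_length_1 in H; cbn in H; subst; reflexivity.
  - exfalso; apply Permutation_length in H; cbn in H; rewrite length_app in H.
    destruct (leaves l) eqn:El; [exact (leaves_nonnil l El)|].
    destruct (leaves r) eqn:Er; [exact (leaves_nonnil r Er)|].
    cbn in H; lia.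
Qed.

Lemma sorted_nodup s : StronglySorted lt s -> NoDup s.
Proof.
  induction 1 as [|x s _ IH Hx]; constructor; auto.
  intros Hin; rewrite Forall_forall in Hx; specialize (Hx _ Hin); lia.
Qed.

Lemma sorted_split x s p : StronglySorted lt (x :: s) -> In p (splits s) ->
  StronglySorted lt (x :: fst p) /\ StronglySorted lt (snd p).
Proof.
  intros Hs Hp; apply StronglySorted_inv in Hs as [Hs Hx].
  rewrite Forall_forall in Hx; destruct (splits_sorted s p Hs Hp) as [HA HB].
  split; auto; constructor; auto.
  apply Forall_forall; intros z Hz; apply Hx, (splits_incl s p); auto.
Qed.

Lemma node_canonical x s p l r : StronglySorted lt (x :: s) -> In p (splits s) ->
  Permutation (leaves l) (x :: fst p) -> canonical l ->
  Permutation (leaves r) (snd p) -> canonical r ->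
  Permutation (leaves (Node l r)) (x :: s) /\ canonical (Node l r).
Proof.
  intros Hs Hp Pl Cl Pr Cr; apply StronglySorted_inv in Hs as [_ Hx].
  rewrite Forall_forall in Hx; cbn; split.
  - rewrite Pl, Pr; constructor; apply splits_perm; auto.
  - repeat split; auto.
    assert (minleaf l <= x)%nat by
      (apply minleaf_le, (Permutation_in x (Permutation_sym Pl)); now left).
    assert (x < minleaf r)%nat; [|lia].
    apply Hx, (splits_incl s p); auto; right.
    apply (Permutation_in _ Pr), minleaf_in.
Qed.

Lemma canonical_node_split x s t : StronglySorted lt (x :: s) -> s <> [] ->
  Permutation (leaves t) (x :: s) -> canonical t ->
  exists p l r, In p (splits s) /\ t = Node l r /\
    (Permutation (leaves l) (x :: fst p) /\ canonical l) /\
    (Permutation (leaves r) (snd p) /\ canonical r).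
Proof.
  intros Hs Hne P C; apply StronglySorted_inv in Hs as [_ Hx].
  rewrite Forall_forall in Hx.
  destruct t as [k|l r].
  { apply Permutation_length in P; destruct s; cbn in P; [contradiction|discriminate]. }
  cbn in P, C; destruct C as [Cm [Cl Cr]].
  assert (Hxl : In x (leaves l)).
  { assert (Hxt : In x (leaves l ++ leaves r))
      by (apply (Permutation_in x (Permutation_sym P)); now left).
    apply in_app_or in Hxt as [Hxt|Hxt]; auto; exfalso.
    assert (Hm : In (minleaf l) (x :: s))
      by (apply (Permutation_in _ P), in_or_app; left; apply minleaf_in).
    assert (minleaf r <= x)%nat by (apply minleaf_le; exact Hxt).
    destruct Hm as [Hm|Hm]; [lia|specialize (Hx _ Hm); lia]. }
  apply in_split in Hxl as [u [v Euv]].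
  assert (P' : Permutation ((u ++ v) ++ leaves r) s).
  { apply (Permutation_cons_inv (a := x)); rewrite <- P, Euv, <- !app_assoc.
    apply Permutation_middle. }
  destruct (splits_complete s _ _ P') as [p [Hp [P1 P2]]].
  exists p, l, r; repeat split; auto.
  rewrite Euv, <- Permutation_middle; constructor; exact P1.
Qed.

(* Canonical trees on a sorted label list [x :: s]: a leaf if [s] is empty,
   otherwise nodes [Node l r] with [l] on [x] plus the left part of a split of
   [s] and [r] on the right part.  [fuel] bounds the recursion depth and is
   sufficient when it is at least the number of labels. *)
Fixpoint gen (fuel : nat) (labels : list nat) : list tree :=
  match fuel, labels with
  | O, _ | _, [] => []
  | S f, [x] => [Leaf x]
  | S f, x :: s =>
      flat_map (fun p => map (fun q => Node (fst q) (snd q))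
                              (list_prod (gen f (x :: fst p)) (gen f (snd p))))
               (splits s)
  end.

Lemma gen_nil fuel : gen fuel [] = [].
Proof. destruct fuel; reflexivity. Qed.

Lemma in_gen_node f x y s t :
  In t (gen (S f) (x :: y :: s)) <->
  exists p l r, In p (splits (y :: s)) /\ t = Node l r /\
    In l (gen f (x :: fst p)) /\ In r (gen f (snd p)).
Proof.
  cbn [gen]; rewrite in_flat_map; split.
  - intros [p [Hp Ht]]; apply in_map_iff in Ht as [[l r] [<- Hq]].
    apply in_prod_iff in Hq; exists p, l, r; tauto.
  - intros [p [l [r [Hp [-> [Hl Hr]]]]]]; exists p; split; auto.
    apply in_map_iff; exists (l, r); split; auto; apply in_prod_iff; auto.
Qed.

Lemma gen_sound fuel labels t : StronglySorted lt labels ->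
  In t (gen fuel labels) -> Permutation (leaves t) labels /\ canonical t.
Proof.
  revert labels t; induction fuel as [|f IH]; intros labels t Hs Ht; [destruct Ht|].
  destruct labels as [|x [|y s]]; [destruct Ht| |].
  - destruct Ht as [<-|[]]; cbn; auto.
  - apply in_gen_node in Ht as [p [l [r [Hp [-> [Hl Hr]]]]]].
    destruct (sorted_split x (y :: s) p Hs Hp) as [HA HB].
    destruct (IH _ _ HA Hl), (IH _ _ HB Hr); apply (node_canonical x (y :: s) p); auto.
Qed.

Lemma gen_complete fuel labels t : StronglySorted lt labels ->
  (length labels <= fuel)%nat ->
  Permutation (leaves t) labels -> canonical t -> In t (gen fuel labels).
Proof.
  revert labels t; induction fuel as [|f IH]; intros labels t Hs Hl P C.
  { destruct labels; [|cbn in Hl; lia].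
    apply Permutation_sym, Permutation_nil in P; destruct (leaves_nonnil t P). }
  destruct labels as [|x [|y s]].
  - apply Permutation_sym, Permutation_nil in P; destruct (leaves_nonnil t P).
  - left; symmetry; apply perm_single_leaf; exact P.
  - destruct (canonical_node_split x (y :: s) t Hs ltac:(discriminate) P C)
      as [p [l [r [Hp [-> [[Pl Cl] [Pr Cr]]]]]]].
    destruct (sorted_split x (y :: s) p Hs Hp) as [HA HB].
    assert (Hlen := Permutation_length (splits_perm _ p Hp)).
    assert (Hr : length (snd p) <> 0%nat).
    { rewrite <- (Permutation_length Pr); intros E.
      apply length_zero_iff_nil in E; exact (leaves_nonnil r E). }
    rewrite length_app in Hlen; cbn in Hl, Hlen.
    apply in_gen_node; exists p, l, r; repeat split; auto;
      apply IH; auto; cbn; lia.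
Qed.

Lemma nodup_list_prod {A B} (L1 : list A) (L2 : list B) :
  NoDup L1 -> NoDup L2 -> NoDup (list_prod L1 L2).
Proof.
  induction 1 as [|a L1 Ha _ IH]; intros H2; cbn; [constructor|].
  apply NoDup_app; auto.
  - apply FinFun.Injective_map_NoDup; auto; intros b c E; congruence.
  - intros [a' b] H H'; apply in_map_iff in H as [c [E _]]; injection E as <- _.
    apply in_prod_iff in H'; tauto.
Qed.

Lemma nodup_flat_map {A B} (f : A -> list B) L : NoDup L ->
  (forall x, In x L -> NoDup (f x)) ->
  (forall x y z, In x L -> In y L -> In z (f x) -> In z (f y) -> x = y) ->
  NoDup (flat_map f L).
Proof.
  induction 1 as [|a L Ha _ IH]; intros H1 H2; cbn; [constructor|].
  apply NoDup_app.
  - apply H1; now left.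
  - apply IH; [intros; apply H1; now right|].
    intros x y z Hx Hy; apply H2; now right.
  - intros z Hz Hz'; apply in_flat_map in Hz' as [y [Hy Hz']].
    assert (a = y) by (apply (H2 a y z); cbn; auto). subst; contradiction.
Qed.

Lemma gen_nodup fuel labels : StronglySorted lt labels -> NoDup (gen fuel labels).
Proof.
  revert labels; induction fuel as [|f IH]; intros labels Hs; [constructor|].
  destruct labels as [|x [|y s]]; [constructor|repeat constructor; auto|].
  assert (Hs' := proj1 (StronglySorted_inv Hs)).
  apply nodup_flat_map.
  - apply splits_nodup, sorted_nodup; exact Hs'.
  - intros p Hp; destruct (sorted_split x (y :: s) p Hs Hp) as [HA HB].
    apply FinFun.Injective_map_NoDup; [|apply nodup_list_prod; auto].
    intros [l r] [l' r'] E; cbn in E; congruence.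
  - intros p p' z Hp Hp' Hz Hz'.
    apply in_map_iff in Hz as [[l r] [<- Hq]], Hz' as [[l' r'] [E Hq']].
    injection E as -> _; apply in_prod_iff in Hq as [Hl _], Hq' as [Hl' _].
    apply (splits_unique (y :: s)); auto; [apply sorted_nodup; exact Hs'|].
    apply (Permutation_cons_inv (a := x)).
    rewrite <- (proj1 (gen_sound _ _ _ (proj1 (sorted_split x _ p Hs Hp)) Hl)).
    exact (proj1 (gen_sound _ _ _ (proj1 (sorted_split x _ p' Hs Hp')) Hl')).
Qed.

Local Open Scope nat_scope.

Fixpoint c2 (k : nat) : nat := match k with O => O | S m => c2 m + m end.

(* Recursive form of Phi: the pairs below a common child gain one level of
   depth, i.e. Phi(Node l r) = Phi(l) + Phi(r) + C(kappa l, 2) + C(kappa r, 2). *)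
Fixpoint phi_rec (t : tree) : nat :=
  match t with
  | Leaf _ => 0
  | Node l r => phi_rec l + phi_rec r + c2 (kappa l) + c2 (kappa r)
  end.

Lemma list_sum_flat_map {A} (g : A -> list nat) L :
  list_sum (flat_map g L) = list_sum (map (fun x => list_sum (g x)) L).
Proof. induction L as [|x L IH]; cbn; [reflexivity|]. rewrite list_sum_app, IH; reflexivity. Qed.

Definition cross_sum (A B : list nat) (h : nat -> nat -> nat) : nat :=
  list_sum (map (fun i => list_sum (map (fun j => if i <? j then h i j else 0) B)) A).

Definition pair_sum (L : list nat) (h : nat -> nat -> nat) : nat := cross_sum L L h.

Lemma cross_sum_cons i A B h : cross_sum (i :: A) B h =
  list_sum (map (fun j => if i <? j then h i j else 0) B) + cross_sum A B h.
Proof. reflexivity. Qed.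

Lemma cross_sum_app_l A1 A2 B h :
  cross_sum (A1 ++ A2) B h = cross_sum A1 B h + cross_sum A2 B h.
Proof. unfold cross_sum; rewrite map_app, list_sum_app; reflexivity. Qed.

Lemma cross_sum_app_r A B1 B2 h :
  cross_sum A (B1 ++ B2) h = cross_sum A B1 h + cross_sum A B2 h.
Proof.
  induction A as [|i A IH]; [reflexivity|].
  rewrite !cross_sum_cons, map_app, list_sum_app, IH; lia.
Qed.

Lemma cross_sum_ext A B h h' :
  (forall i j, In i A -> In j B -> h i j = h' i j) -> cross_sum A B h = cross_sum A B h'.
Proof.
  intros H; unfold cross_sum; f_equal; apply map_ext_in; intros i Hi.
  f_equal; apply map_ext_in; intros j Hj; rewrite H; auto.
Qed.

Lemma cross_sum_plus A B h h' :
  cross_sum A B (fun i j => h i j + h' i j) = cross_sum A B h + cross_sum A B h'.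
Proof.
  induction A as [|i A IH]; [reflexivity|]. rewrite !cross_sum_cons, IH.
  enough (list_sum (map (fun j => if i <? j then h i j + h' i j else 0) B) =
          list_sum (map (fun j => if i <? j then h i j else 0) B) +
          list_sum (map (fun j => if i <? j then h' i j else 0) B)) by lia.
  clear IH; induction B as [|j B IHB]; [reflexivity|]; unfold list_sum in *; cbn [map fold_right] in *.
  destruct (i <? j); lia.
Qed.

Lemma cross_sum_zero A B : cross_sum A B (fun _ _ => 0) = 0.
Proof.
  induction A as [|i A IH]; [reflexivity|]. rewrite cross_sum_cons, IH.
  clear IH; induction B as [|j B IHB]; [reflexivity|]; unfold list_sum in *; cbn [map fold_right] in *.
  destruct (i <? j); lia.
Qed.

Lemma pair_sum_perm L1 L2 h : Permutation L1 L2 -> pair_sum L1 h = pair_sum L2 h.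
Proof.
  intros P; unfold pair_sum, cross_sum.
  rewrite (Permutation_list_sum (Permutation_map _ P)).
  f_equal; apply map_ext; intros i; apply Permutation_list_sum, Permutation_map; exact P.
Qed.

Lemma pair_sum_app A B h :
  pair_sum (A ++ B) h = pair_sum A h + pair_sum B h + cross_sum A B h + cross_sum B A h.
Proof. unfold pair_sum; rewrite cross_sum_app_l, !cross_sum_app_r; lia. Qed.

Lemma pair_sum_single x h : pair_sum [x] h = 0.
Proof. unfold pair_sum, cross_sum; cbn -[Nat.ltb]; rewrite Nat.ltb_irrefl; reflexivity. Qed.

Lemma cross_sum_single x L : ~ In x L ->
  cross_sum [x] L (fun _ _ => 1) + cross_sum L [x] (fun _ _ => 1) = length L.
Proof.
  induction L as [|j L IH]; intros Hx; [reflexivity|].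
  change (j :: L) with ([j] ++ L); rewrite cross_sum_app_l, cross_sum_app_r.
  assert (j <> x) by (intros ->; apply Hx; now left).
  assert (IH' := IH (fun H => Hx (or_intror H))).
  cbn [length app]; unfold cross_sum in *; unfold list_sum in *; cbn [map fold_right] in *.
  destruct (Nat.ltb_spec x j), (Nat.ltb_spec j x); lia.
Qed.

Lemma pair_sum_count L : NoDup L -> pair_sum L (fun _ _ => 1) = c2 (length L).
Proof.
  induction 1 as [|x L Hx _ IH]; [reflexivity|].
  cbn [length c2]; change (x :: L) with ([x] ++ L) at 1.
  rewrite pair_sum_app, IH, <- (cross_sum_single x L Hx).
  rewrite pair_sum_single; lia.
Qed.

Lemma has_leaf_iff t i : has_leaf t i = true <-> In i (leaves t).
Proof.
  unfold has_leaf; rewrite existsb_exists; split.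
  - intros [k [Hk E]]; apply Nat.eqb_eq in E; subst; exact Hk.
  - intros H; exists i; split; auto; apply Nat.eqb_refl.
Qed.

Lemma has_leaf_false t i : ~ In i (leaves t) -> has_leaf t i = false.
Proof. intros H; apply Bool.not_true_is_false; rewrite has_leaf_iff; exact H. Qed.

Lemma lca_node_left l r i j : In i (leaves l) -> In j (leaves l) ->
  lca_depth (Node l r) i j = S (lca_depth l i j).
Proof. intros Hi Hj; cbn; rewrite (proj2 (has_leaf_iff l i) Hi), (proj2 (has_leaf_iff l j) Hj); reflexivity. Qed.

Lemma lca_node_right l r i j : ~ In i (leaves l) -> In i (leaves r) -> In j (leaves r) ->
  lca_depth (Node l r) i j = S (lca_depth r i j).
Proof.
  intros Hil Hi Hj; cbn; rewrite (has_leaf_false l i Hil).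
  rewrite (proj2 (has_leaf_iff r i) Hi), (proj2 (has_leaf_iff r j) Hj); reflexivity.
Qed.

Lemma lca_node_cross l r i j :
  (~ In i (leaves l) \/ ~ In j (leaves l)) -> (~ In i (leaves r) \/ ~ In j (leaves r)) ->
  lca_depth (Node l r) i j = 0.
Proof.
  intros Hl Hr; cbn.
  replace (has_leaf l i && has_leaf l j)%bool with false
    by (destruct Hl as [H|H]; rewrite (has_leaf_false _ _ H); [|rewrite Bool.andb_false_r]; reflexivity).
  replace (has_leaf r i && has_leaf r j)%bool with false
    by (destruct Hr as [H|H]; rewrite (has_leaf_false _ _ H); [|rewrite Bool.andb_false_r]; reflexivity).
  reflexivity.
Qed.

Lemma nodup_app_disjoint {A} (l1 l2 : list A) a : NoDup (l1 ++ l2) -> In a l1 -> ~ In a l2.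
Proof.
  intros H H1 H2; apply in_split in H1 as [u [v ->]]; rewrite <- app_assoc in H.
  apply (NoDup_remove_2 u (v ++ l2) a H), in_or_app; right; apply in_or_app; now right.
Qed.

Lemma pair_sum_lca t : NoDup (leaves t) -> pair_sum (leaves t) (lca_depth t) = phi_rec t.
Proof.
  induction t as [k|l IHl r IHr]; intros H; [apply pair_sum_single|].
  cbn [leaves phi_rec] in *; unfold kappa.
  assert (Hl := NoDup_app_remove_r _ _ H); assert (Hr := NoDup_app_remove_l _ _ H).
  assert (D : forall a, In a (leaves l) -> ~ In a (leaves r))
    by (intros a; apply nodup_app_disjoint; exact H).
  rewrite pair_sum_app.
  rewrite (cross_sum_ext (leaves l) (leaves r) _ (fun _ _ => 0))
    by (intros i j Hi Hj; apply lca_node_cross; [right|left]; intro; eapply D; eauto).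
  rewrite (cross_sum_ext (leaves r) (leaves l) _ (fun _ _ => 0))
    by (intros i j Hi Hj; apply lca_node_cross; [left|right]; intro; eapply D; eauto).
  rewrite !cross_sum_zero; unfold pair_sum.
  rewrite (cross_sum_ext (leaves l) (leaves l) _ (fun i j => 1 + lca_depth l i j))
    by (intros i j Hi Hj; apply lca_node_left; auto).
  rewrite (cross_sum_ext (leaves r) (leaves r) _ (fun i j => 1 + lca_depth r i j))
    by (intros i j Hi Hj; apply lca_node_right; auto; intro; eapply D; eauto).
  rewrite !cross_sum_plus; fold (pair_sum (leaves l) (fun _ _ => 1)) (pair_sum (leaves r) (fun _ _ => 1)).
  rewrite !pair_sum_count by assumption.
  fold (pair_sum (leaves l) (lca_depth l)) (pair_sum (leaves r) (lca_depth r)).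
  rewrite IHl, IHr by assumption; lia.
Qed.

Lemma Phi_pair_sum n t : Phi n t = pair_sum (seq 1 n) (lca_depth t).
Proof.
  unfold Phi, pair_sum, cross_sum; fold (list_sum (flat_map
    (fun i => map (fun j => lca_depth t i j) (seq (S i) (n - i))) (seq 1 n))).
  rewrite list_sum_flat_map; f_equal; apply map_ext_in; intros i Hi.
  apply in_seq in Hi.
  replace (seq 1 n) with (seq 1 i ++ seq (S i) (n - i)) by (rewrite <- seq_app; f_equal; lia).
  rewrite map_app, list_sum_app.
  rewrite (map_ext_in _ (fun _ => 0) (seq 1 i)).
  2:{ intros j Hj; apply in_seq in Hj; destruct (Nat.ltb_spec i j); lia. }
  rewrite (map_ext_in (fun j => if i <? j then lca_depth t i j else 0) (lca_depth t i)).
  2:{ intros j Hj; apply in_seq in Hj; destruct (Nat.ltb_spec i j); lia. }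
  replace (list_sum (map (fun _ => 0) (seq 1 i))) with 0; [reflexivity|].
  induction (seq 1 i); cbn; auto.
Qed.

Lemma Phi_phi_rec n t : Permutation (leaves t) (seq 1 n) -> Phi n t = phi_rec t.
Proof.
  intros P; rewrite Phi_pair_sum, <- (pair_sum_perm _ _ _ P).
  apply pair_sum_lca, (Permutation_NoDup (Permutation_sym P)), seq_NoDup.
Qed.

Local Close Scope nat_scope.

Definition yule_phi (t : tree) : R := yule_prod t * INR (phi_rec t).

(* Total Yule weight of the trees on n labels: the normalisation of P_Y. *)
Definition yule_mass (n : nat) : R := INR (fact n) / 2 ^ (n - 1).

Definition expected_phi (n : nat) : R := INR n * (INR n + 1) - 2 * INR n * harmonic n.

(* Contribution of a child with k leaves to the Phi of its parent. *)
Definition child_phi (k : nat) : R := expected_phi k + INR (c2 k).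

Lemma c2_INR k : INR (c2 k) = INR k * (INR k - 1) / 2.
Proof. induction k as [|k IH]; cbn [c2]; [cbn; lra|]. rewrite plus_INR, IH, S_INR; lra. Qed.

Lemma sum_child_phi m :
  sum_f_R0 (fun a => child_phi (S a)) m = INR (S m) * expected_phi (S (S m)) / 2.
Proof.
  induction m as [|m IH]; [unfold child_phi, expected_phi; cbn; lra|].
  rewrite tech5, IH; unfold child_phi, expected_phi; rewrite c2_INR.
  change (harmonic (S (S (S m)))) with (harmonic (S (S m)) + / INR (S (S (S m)))).
  change (harmonic (S (S m))) with (harmonic (S m) + / INR (S (S m))).
  rewrite !S_INR; assert (0 <= INR m) by apply pos_INR; field; lra.
Qed.

(* Number of splits of [s] by sizes: [C(|s|, a)] splits have a left part of size [a]. *)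
Lemma lsum_splits_by_size s (chi : nat -> nat -> R) :
  lsum (fun p => INR (fact (length (fst p))) * INR (fact (length (snd p))) *
                 chi (length (fst p)) (length (snd p))) (splits s)
  = INR (fact (length s)) * sum_f_R0 (fun a => chi a (length s - a)%nat) (length s).
Proof.
  revert chi; induction s as [|y s IH]; intros chi.
  { cbn [splits]; rewrite lsum_cons, lsum_nil; cbn; lra. }
  cbn [splits length]; rewrite lsum_app, !lsum_map; cbn [fst snd length].
  set (m := length s).
  rewrite (lsum_ext _ (fun p => INR (fact (length (fst p))) * INR (fact (length (snd p))) *
             (INR (S (length (fst p))) * chi (S (length (fst p))) (length (snd p)))))
    by (intros; rewrite fact_simpl, mult_INR; ring).
  rewrite (lsum_ext (fun p => _ * INR (fact (S (length (snd p)))) * _)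
             (fun p => INR (fact (length (fst p))) * INR (fact (length (snd p))) *
             (INR (S (length (snd p))) * chi (length (fst p)) (S (length (snd p))))))
    by (intros; rewrite fact_simpl, mult_INR; ring).
  rewrite (IH (fun a b => INR (S a) * chi (S a) b)), (IH (fun a b => INR (S b) * chi a (S b))).
  cbv beta; fold m; rewrite fact_simpl, mult_INR.
  (* with T a := chi a (m+1-a), the two sums are sum_a a T a and sum_a (m+1-a) T a *)
  set (T := fun a => chi a (S m - a)%nat).
  assert (E1 : sum_f_R0 (fun a => INR (S a) * chi (S a) (m - a)%nat) m =
               sum_f_R0 (fun a => INR a * T a) (S m)).
  { rewrite (decomp_sum (fun a => INR a * T a)) by lia; cbn [Nat.pred].
    change (INR 0) with 0; rewrite Rmult_0_l, Rplus_0_l; reflexivity. }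
  assert (E2 : sum_f_R0 (fun a => INR (S (m - a)) * chi a (S (m - a))) m =
               sum_f_R0 (fun a => (INR (S m) - INR a) * T a) (S m)).
  { rewrite tech5, Rminus_diag, Rmult_0_l, Rplus_0_r; apply sum_eq; intros a Ha.
    unfold T; replace (S m - a)%nat with (S (m - a)) by lia.
    rewrite S_INR, minus_INR, S_INR by lia; ring. }
  rewrite E1, E2, <- Rmult_plus_distr_l, <- plus_sum.
  rewrite (sum_eq _ (fun a => T a * INR (S m))) by (intros; ring).
  rewrite <- scal_sum; ring.
Qed.

(* Normalised weight of the splits with parts of sizes [a] and [b] of a set of
   [m] labels (no tree has an empty right subtree). *)
Definition split_weight (m a b : nat) : R :=
  if (b =? 0)%nat then 0 else INR (S a) / (INR m * 2 ^ (m - 1)).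

Lemma merge_weight a b : (b <> 0)%nat ->
  / INR (a + b) * yule_mass (S a) * yule_mass b =
  INR (fact a) * INR (fact b) * split_weight (a + b) a b.
Proof.
  intros Hb; unfold yule_mass, split_weight.
  replace (b =? 0)%nat with false by (symmetry; apply Nat.eqb_neq; lia).
  replace (a + b - 1)%nat with (a + (b - 1))%nat by lia.
  replace (S a - 1)%nat with a by lia; rewrite pow_add, fact_simpl, mult_INR.
  field; repeat split; try (apply pow_nonzero; lra); apply not_0_INR; lia.
Qed.

Lemma split_weight_sum m (g : nat -> R) : (m <> 0)%nat ->
  sum_f_R0 (fun a => split_weight m a (m - a) * g a) m =
  / (INR m * 2 ^ (m - 1)) * sum_f_R0 (fun a => INR (S a) * g a) (m - 1).
Proof.
  intros Hm; destruct m as [|k]; [lia|]; replace (S k - 1)%nat with k by lia.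
  rewrite tech5, Nat.sub_diag.
  replace (split_weight (S k) (S k) 0) with 0 by reflexivity.
  rewrite Rmult_0_l, Rplus_0_r, scal_sum; apply sum_eq; intros a Ha.
  unfold split_weight; replace (S k - a =? 0)%nat with false
    by (symmetry; apply Nat.eqb_neq; lia).
  replace (S k - 1)%nat with k by lia; unfold Rdiv; ring.
Qed.

Lemma yule_mass_recursion m : (m <> 0)%nat ->
  INR (fact m) * sum_f_R0 (fun a => split_weight m a (m - a)) m = yule_mass (S m).
Proof.
  intros Hm.
  rewrite (sum_eq _ (fun a => split_weight m a (m - a) * 1)) by (intros; ring).
  rewrite split_weight_sum by exact Hm.
  rewrite (sum_eq _ (fun a => INR (S a))) by (intros; ring).
  destruct m as [|k]; [lia|]; replace (S k - 1)%nat with k by lia.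
  rewrite sum_succ_INR; unfold yule_mass; replace (S (S k) - 1)%nat with (S k) by lia.
  rewrite (fact_simpl (S k)), mult_INR.
  cbn [pow]; rewrite !(S_INR (S k)), S_INR.
  field; split; [apply pow_nonzero; lra|]; rewrite <- S_INR; apply not_0_INR; lia.
Qed.

(* Recursion for the Yule-weighted Phi; solved by [expected_phi] thanks to
   [sum_child_phi] after symmetrising the sum. *)
Lemma yule_phi_recursion m : (m <> 0)%nat ->
  INR (fact m) *
  sum_f_R0 (fun a => split_weight m a (m - a) * (child_phi (S a) + child_phi (m - a))) m =
  yule_mass (S m) * expected_phi (S m).
Proof.
  intros Hm; rewrite split_weight_sum by exact Hm.
  destruct m as [|k]; [lia|]; replace (S k - 1)%nat with k by lia.
  rewrite (sum_eq _ (fun a => INR (S a) * child_phi (S a) +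
                              INR (S a) * child_phi (S k - a)%nat)) by (intros; ring).
  rewrite plus_sum, (sum_f_R0_reflect (fun a => INR (S a) * child_phi (S k - a)%nat)).
  rewrite <- plus_sum.
  rewrite (sum_eq _ (fun a => child_phi (S a) * INR (S (S k)))).
  2:{ intros a Ha; replace (S k - (k - a))%nat with (S a) by lia.
      rewrite !S_INR, minus_INR by lia; ring. }
  rewrite <- scal_sum, sum_child_phi.
  unfold yule_mass; replace (S (S k) - 1)%nat with (S k) by lia.
  rewrite (fact_simpl (S k)), mult_INR.
  cbn [pow]; rewrite !(S_INR (S k)), S_INR.
  field; split; [apply pow_nonzero; lra|]; rewrite <- S_INR; apply not_0_INR; lia.
Qed.

Lemma lsum_pairs2 {A B} (f1 f2 : A -> R) (g1 g2 : B -> R) L1 L2 :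
  lsum (fun a => lsum (fun b => f1 a * g1 b + f2 a * g2 b) L2) L1 =
  lsum f1 L1 * lsum g1 L2 + lsum f2 L1 * lsum g2 L2.
Proof.
  rewrite (lsum_ext _ (fun a => lsum (fun b => f1 a * g1 b) L2 + lsum (fun b => f2 a * g2 b) L2))
    by (intros; apply lsum_plus).
  rewrite lsum_plus, !lsum_pairs; reflexivity.
Qed.

Lemma yule_prod_node l r a b : kappa l = S a -> kappa r = b ->
  yule_prod (Node l r) = / INR (a + b) * yule_prod l * yule_prod r.
Proof.
  intros Hl Hr; cbn [yule_prod]; unfold kappa at 1; cbn [leaves].
  rewrite length_app; fold (kappa l) (kappa r); rewrite Hl, Hr.
  replace (INR (S a + b) - 1) with (INR (a + b)) by (rewrite !plus_INR, S_INR; ring).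
  reflexivity.
Qed.

Lemma lsum_yule_shift L k :
  lsum (fun t => yule_prod t * (INR (phi_rec t) + INR (c2 k))) L =
  lsum yule_phi L + INR (c2 k) * lsum yule_prod L.
Proof.
  rewrite <- lsum_scal, <- lsum_plus; apply lsum_ext; intros; unfold yule_phi; ring.
Qed.

Section NodeFamilies.
Variables (Ll Lr : list tree) (a b : nat).
Hypothesis b_pos : b <> 0%nat.
Hypothesis kappa_Ll : forall l, In l Ll -> kappa l = S a.
Hypothesis kappa_Lr : forall r, In r Lr -> kappa r = b.
Hypothesis mass_Ll : lsum yule_prod Ll = yule_mass (S a).
Hypothesis mass_Lr : lsum yule_prod Lr = yule_mass b.

Lemma node_family_mass :
  lsum (fun l => lsum (fun r => yule_prod (Node l r)) Lr) Ll =
  INR (fact a) * INR (fact b) * split_weight (a + b) a b.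
Proof.
  rewrite (lsum_ext _ (fun l => lsum (fun r => (/ INR (a + b) * yule_prod l) * yule_prod r) Lr)).
  2:{ intros l Hl; apply lsum_ext; intros r Hr; apply yule_prod_node; auto. }
  rewrite lsum_pairs, lsum_scal, mass_Ll, mass_Lr; exact (merge_weight a b b_pos).
Qed.

Hypothesis phi_Ll : lsum yule_phi Ll = yule_mass (S a) * expected_phi (S a).
Hypothesis phi_Lr : lsum yule_phi Lr = yule_mass b * expected_phi b.

Lemma node_family_phi :
  lsum (fun l => lsum (fun r => yule_phi (Node l r)) Lr) Ll =
  INR (fact a) * INR (fact b) *
  (split_weight (a + b) a b * (child_phi (S a) + child_phi b)).
Proof.
  set (c := / INR (a + b)).
  rewrite (lsum_ext _ (fun l => lsum (fun r =>
      (c * (yule_prod l * (INR (phi_rec l) + INR (c2 (S a))))) * yule_prod r +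
      (c * yule_prod l) * (yule_prod r * (INR (phi_rec r) + INR (c2 b)))) Lr)).
  2:{ intros l Hl; apply lsum_ext; intros r Hr; unfold yule_phi.
      rewrite (yule_prod_node l r a b) by auto; cbn [phi_rec].
      unfold c; rewrite kappa_Ll, kappa_Lr, !plus_INR by auto; ring. }
  rewrite lsum_pairs2, !lsum_scal, !lsum_yule_shift, phi_Ll, phi_Lr, mass_Ll, mass_Lr.
  rewrite <- Rmult_assoc, <- (merge_weight a b b_pos); unfold c, child_phi; ring.
Qed.
End NodeFamilies.

Lemma gen_node_sum (w : tree -> R) f x y s :
  lsum w (gen (S f) (x :: y :: s)) =
  lsum (fun p => lsum (fun l => lsum (fun r => w (Node l r)) (gen f (snd p)))
                      (gen f (x :: fst p)))
       (splits (y :: s)).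
Proof.
  cbn [gen]; rewrite lsum_flat_map; apply lsum_ext; intros p _.
  rewrite lsum_map; exact (lsum_list_prod w Node _ _).
Qed.

Lemma gen_kappa fuel labels t : StronglySorted lt labels ->
  In t (gen fuel labels) -> kappa t = length labels.
Proof.
  intros Hs Ht; unfold kappa; apply Permutation_length, (gen_sound fuel labels t Hs Ht).
Qed.

Definition gen_sums_at (fuel : nat) : Prop :=
  forall labels, StronglySorted lt labels -> labels <> [] -> (length labels <= fuel)%nat ->
  lsum yule_prod (gen fuel labels) = yule_mass (length labels) /\
  lsum yule_phi (gen fuel labels) = yule_mass (length labels) * expected_phi (length labels).

Lemma split_sums f x s p : gen_sums_at f ->
  StronglySorted lt (x :: s) -> (length (x :: s) <= S f)%nat -> In p (splits s) ->
  let a := length (fst p) in let b := length (snd p) in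
  lsum (fun l => lsum (fun r => yule_prod (Node l r)) (gen f (snd p))) (gen f (x :: fst p))
    = INR (fact a) * INR (fact b) * split_weight (length s) a b /\
  lsum (fun l => lsum (fun r => yule_phi (Node l r)) (gen f (snd p))) (gen f (x :: fst p))
    = INR (fact a) * INR (fact b) *
      (split_weight (length s) a b * (child_phi (S a) + child_phi b)).
Proof.
  intros IH Hs Hl Hp a b.
  destruct (sorted_split x s p Hs Hp) as [HA HB].
  assert (Hab : (a + b)%nat = length s)
    by (unfold a, b; rewrite <- length_app; apply Permutation_length, splits_perm, Hp).
  destruct (Nat.eq_dec b 0) as [Hb0|Hb].
  { assert (Eb : snd p = []) by (apply length_zero_iff_nil; exact Hb0).
    rewrite Eb, gen_nil; unfold split_weight; rewrite Hb0; cbn [Nat.eqb].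
    split; rewrite (lsum_ext _ (fun _ => 0 * 0)) by (intros; rewrite lsum_nil; ring);
      rewrite lsum_scal; ring. }
  cbn [length] in Hl.
  destruct (IH (x :: fst p)) as [Ml Wl]; auto; [discriminate|cbn; lia|].
  destruct (IH (snd p)) as [Mr Wr]; auto;
    [intros E; apply Hb; unfold b; rewrite E; reflexivity|lia|].
  rewrite <- Hab; split; [apply node_family_mass|apply node_family_phi]; auto;
    intros t Ht; first [rewrite (gen_kappa _ _ t HA Ht) | rewrite (gen_kappa _ _ t HB Ht)];
    reflexivity.
Qed.

Lemma gen_sums fuel : gen_sums_at fuel.
Proof.
  induction fuel as [|f IH]; intros labels Hs Hne Hl.
  { destruct labels; [contradiction|cbn in Hl; lia]. }
  destruct labels as [|x [|y s]]; [contradiction| |].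
  { cbn [gen]; rewrite !lsum_cons, !lsum_nil.
    unfold yule_phi, yule_mass, expected_phi; cbn; split; field. }
  set (m := length (y :: s)); change (length (x :: y :: s)) with (S m).
  assert (Hm : m <> 0%nat) by discriminate.
  rewrite !gen_node_sum.
  rewrite (lsum_ext _ (fun p => INR (fact (length (fst p))) * INR (fact (length (snd p))) *
             split_weight m (length (fst p)) (length (snd p))))
    by (intros p Hp; apply (split_sums f x (y :: s) p IH); auto).
  rewrite (lsum_ext (fun p => lsum (fun l => lsum (fun r => yule_phi (Node l r)) _) _)
             (fun p => INR (fact (length (fst p))) * INR (fact (length (snd p))) *
             (fun a b => split_weight m a b * (child_phi (S a) + child_phi b))
               (length (fst p)) (length (snd p))))
    by (intros p Hp; apply (split_sums f x (y :: s) p IH); auto).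
  rewrite (lsum_splits_by_size _ (split_weight m)),
    (lsum_splits_by_size _ (fun a b => split_weight m a b * (child_phi (S a) + child_phi b))).
  fold m.
  split; [apply yule_mass_recursion|apply yule_phi_recursion]; exact Hm.
Qed.

Lemma seq_sorted a n : StronglySorted lt (seq a n).
Proof.
  revert a; induction n as [|n IH]; intros a; constructor; auto.
  apply Forall_forall; intros z Hz; apply in_seq in Hz; lia.
Qed.

Lemma enum_perm_gen (L : list tree) n :
  NoDup L -> (forall t, In t L <-> IsBT n t) -> Permutation L (gen n (seq 1 n)).
Proof.
  intros ND HL; apply NoDup_Permutation; auto using gen_nodup, seq_sorted.
  intros t; rewrite HL; unfold IsBT; split.
  - intros [P C]; apply gen_complete; auto using seq_sorted; rewrite length_seq; lia.
  - apply gen_sound, seq_sorted.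
Qed.

Lemma E_Y_Phi_exact (L : list tree) n : (1 <= n)%nat ->
  NoDup L -> (forall t, In t L <-> IsBT n t) -> E_Y_Phi n L = expected_phi n.
Proof.
  intros Hn ND HL.
  change (E_Y_Phi n L) with (lsum (fun t => P_Y n t * INR (Phi n t)) L).
  rewrite (lsum_perm _ _ _ (enum_perm_gen L n ND HL)).
  rewrite (lsum_ext _ (fun t => 2 ^ (n - 1) / INR (fact n) * yule_phi t)).
  2:{ intros t Ht; apply gen_sound in Ht as [P _]; [|apply seq_sorted].
      unfold P_Y, yule_phi; rewrite (Phi_phi_rec n t P); ring. }
  rewrite lsum_scal.
  destruct (gen_sums n (seq 1 n)) as [_ ->]; auto using seq_sorted.
  - destruct n; [lia|discriminate].
  - rewrite length_seq; lia.
  - rewrite length_seq; unfold yule_mass; field.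
    split; [apply pow_nonzero; lra|apply INR_fact_neq_0].
Qed.

Theorem mainTheorem15 :
  forall (enum : nat -> list tree),
    (forall n, NoDup (enum n) /\ (forall t, In t (enum n) <-> IsBT n t)) ->
  forall gamma : R,
    Un_cv (fun n => harmonic n - ln (INR n)) gamma ->
    Un_cv (fun n =>
             (E_Y_Phi n (enum n)
              - (INR n ^ 2 + (1 - 2 * gamma) * INR n - 2 * INR n * ln (INR n)))
             / INR n) 0.
Proof.
  intros enum Henum gamma Hgamma eps Heps.
  destruct (Hgamma (eps / 2)) as [N HN]; [lra|].
  exists (Nat.max N 1); intros n Hn; specialize (HN n ltac:(lia)).
  destruct (Henum n) as [ND HL].
  rewrite (E_Y_Phi_exact (enum n) n) by (auto; lia); unfold R_dist in *.
  assert (Hpos : 0 < INR n) by (apply lt_0_INR; lia).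
  replace ((expected_phi n - (INR n ^ 2 + (1 - 2 * gamma) * INR n
            - 2 * INR n * ln (INR n))) / INR n - 0)
    with (-2 * (harmonic n - ln (INR n) - gamma)) by (unfold expected_phi; field; lra).
  rewrite Rabs_mult, Rabs_left by lra; lra.
Qed.
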